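(* Let $(\mathcal A\to\mathcal H)$ be a Hopf algebra in $\mathcal{LM}$. Let $\mathcal G_0(\mathcal H)$ be the group of group-like elements of $\mathcal H$ and $\mathcal G_1(\mathcal A)$ the set of edge-like elements of $\mathcal A$, with maps $s,t:\mathcal G_1(\mathcal A)\to\mathcal G_0(\mathcal H)$ assigning to an edge-like $a$ the group-like elements $s(a),t(a)$ with $\Delta_1(a)=a\otimes t(a)+s(a)\otimes a$. Then the two-sided action of $\mathcal H$ on $\mathcal A$ restricts to a two-sided action of $\mathcal G_0(\mathcal H)$ on $\mathcal G_1(\mathcal A)$, and $(\mathcal G_0(\mathcal H)\overset{s}{\underset{t}{\leftleftarrows}}\mathcal G_1(\mathcal A))$ is a group-like graph.
   Context: Over a field $\mathbf k$ of characteristic $0$, the category $\mathcal{LM}$ has objects linear maps $U\to V$ and tensor product $(U\to V)\otimes(U'\to V')=(U\otimes V'+V\otimes U'\to V\otimes V')$. A Hopf algebra in $\mathcal{LM}$ is $(\mathcal A\xrightarrow{f}\mathcal H)$ with $\mathcal H$ a Hopf algebra (coproduct $\Delta_0$, antipode $S_0$), $\mathcal A$ an $\mathcal H$-bimodule, $f$ a bimodule map, a bimodule map $\Delta_1:\mathcal A\to\mathcal A\otimes\mathcal H+\mathcal H\otimes\mathcal A$ with $\Delta_0f=(f\otimes\mathrm{Id}+\mathrm{Id}\otimes f)\Delta_1$, and $S_1:\mathcal A\to\mathcal A$ with $fS_1=S_0f$ and $\mu\circ(S_1\otimes\mathrm{Id}+S_0\otimes\mathrm{Id})\circ\Delta_1=\mu\circ(\mathrm{Id}\otimes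 S_0+\mathrm{Id}\otimes S_1)\circ\Delta_1=0$. An element $a\in\mathcal A$ is edge-like if $\Delta_1(a)=a\otimes t(a)+s(a)\otimes a$ for some group-like elements $s(a),t(a)$ of $\mathcal H$. A group-like graph is a directed graph $(V\overset{s}{\underset{t}{\leftleftarrows}}E)$ together with an associative graph morphism from its Cartesian square (vertices $V\times V$, arrows $E\times V\sqcup V\times E$) to itself such that the induced semigroup structure on $V$ is a group; here the multiplication is given on vertices by the product in $\mathcal G_0(\mathcal H)$ and on arrows by the two-sided action. *)

From HB Require Import structures.
From mathcomp Require Import all_boot all_order all_algebra.
From Stdlib Require Import ClassicalEpsilon.
Set Implicit Arguments. Unset Strict Implicit. Unset Printing Implicit Defensive.
Import GRing.Theory.
Local Open Scope ring_scope.

Section Tensors.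
Variable K : fieldType.

Definition lin (U W : lmodType K) (f : U -> W) : Prop :=
  forall (a : K) (x y : U), f (a *: x + y) = a *: f x + f y.

Definition bilin (U V W : lmodType K) (b : U -> V -> W) : Prop :=
  (forall v : V, lin (fun u => b u v)) /\ (forall u : U, lin (b u)).

(* A tensor product U (x) V of K-vector spaces, given by its universal
   property (it exists and is unique up to unique isomorphism). *)
Record tensor (U V : lmodType K) := Tensor {
  tspace : lmodType K;
  tens : U -> V -> tspace;
  tens_bilin : bilin tens;
  tens_univ : forall (W : lmodType K) (b : U -> V -> W), bilin b ->
    exists phi : tspace -> W, lin phi /\ forall u v, phi (tens u v) = b u v;
  tens_uniq : forall (W : lmodType K) (phi psi : tspace -> W),
    lin phi -> lin psi -> (forall u v, phi (tens u v) = psi (tens u v)) ->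
    forall x, phi x = psi x }.

(* The linear map T -> W induced by a bilinear map b : U -> V -> W
   (chosen by the universal property; only meaningful for bilinear b). *)
Definition tlift (U V : lmodType K) (T : tensor U V) (W : lmodType K)
  (b : U -> V -> W) : tspace T -> W :=
  epsilon (inhabits (fun _ => 0))
    (fun phi => lin phi /\ forall u v, phi (tens T u v) = b u v).

Definition tmap (U V U' V' : lmodType K) (T : tensor U V) (T' : tensor U' V')
  (f : U -> U') (g : V -> V') : tspace T -> tspace T' :=
  @tlift U V T _ (fun u v => tens T' (f u) (g v)).

End Tensors.
Arguments tlift {K U V} T {W} b _.
Arguments tmap {K U V U' V'} T T' f g _.

Record hopf_algebra (K : fieldType) := HopfAlgebra {
  hH : algType K;
  hHH : tensor hH hH;
  hH3l : tensor (tspace hHH) hH;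
  hH3r : tensor hH (tspace hHH);
  Delta0 : hH -> tspace hHH;
  eps0 : hH -> K;
  S0 : hH -> hH;
  Delta0_lin : lin Delta0;
  eps0_lin : forall (a : K) x y, eps0 (a *: x + y) = a * eps0 x + eps0 y;
  S0_lin : lin S0;
  (* coassociativity, through the associator H(x)(H(x)H) -> (H(x)H)(x)H *)
  coassoc : forall h : hH,
    tmap hHH hH3l Delta0 id (Delta0 h) =
    tlift hH3r (fun x yz => tlift hHH (fun y z => tens hH3l (tens hHH x y) z) yz)
      (tmap hHH hH3r id Delta0 (Delta0 h));
  counitl : forall h : hH, tlift hHH (fun x y => eps0 x *: y) (Delta0 h) = h;
  counitr : forall h : hH, tlift hHH (fun x y => eps0 y *: x) (Delta0 h) = h;
  (* Delta0 and eps0 are algebra maps (H (x) H with factorwise product) *)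
  Delta0_mul : forall x y : hH,
    Delta0 (x * y) =
    tlift hHH (fun x1 x2 => tlift hHH (fun y1 y2 => tens hHH (x1 * y1) (x2 * y2))
                              (Delta0 y)) (Delta0 x);
  Delta0_one : Delta0 1 = tens hHH 1 1;
  eps0_mul : forall x y : hH, eps0 (x * y) = eps0 x * eps0 y;
  eps0_one : eps0 1 = 1;
  antipodel : forall h : hH,
    tlift hHH (fun x y => S0 x * y) (Delta0 h) = eps0 h *: (1 : hH);
  antipoder : forall h : hH,
    tlift hHH (fun x y => x * S0 y) (Delta0 h) = eps0 h *: (1 : hH) }.

(* A Hopf algebra (A -f-> H) in LM.  The tensor product of LM is
   (U->V)(x)(U'->V') = (U(x)V' (+) V(x)U' -> V(x)V'); the map
   Delta1 : A -> A(x)H (+) H(x)A is given by its two components. *)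
Record lm_hopf (K : fieldType) := LMHopf {
  lmH : hopf_algebra K;
  lmA : lmodType K;
  actl : hH lmH -> lmA -> lmA;
  actr : lmA -> hH lmH -> lmA;
  actl_bilin : bilin actl;
  actr_bilin : bilin actr;
  actl1 : forall a, actl 1 a = a;
  actlM : forall x y a, actl (x * y) a = actl x (actl y a);
  actr1 : forall a, actr a 1 = a;
  actrM : forall a x y, actr a (x * y) = actr (actr a x) y;
  actlr : forall x a y, actl x (actr a y) = actr (actl x a) y;
  fA : lmA -> hH lmH;
  fA_lin : lin fA;
  fA_l : forall h a, fA (actl h a) = h * fA a;
  fA_r : forall a h, fA (actr a h) = fA a * h;
  lmAH : tensor lmA (hH lmH);
  lmHA : tensor (hH lmH) lmA;
  Delta1l : lmA -> tspace lmAH;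
  Delta1r : lmA -> tspace lmHA;
  Delta1l_lin : lin Delta1l;
  Delta1r_lin : lin Delta1r;
  (* Delta1 is an H-bimodule map, H acting on A(x)H (+) H(x)A through Delta0
     and the factorwise action of H(x)H *)
  Delta1l_actl : forall h a, Delta1l (actl h a) =
    tlift (hHH lmH) (fun x y => tlift lmAH (fun b k => tens lmAH (actl x b) (y * k))
                                  (Delta1l a)) (Delta0 h);
  Delta1r_actl : forall h a, Delta1r (actl h a) =
    tlift (hHH lmH) (fun x y => tlift lmHA (fun k b => tens lmHA (x * k) (actl y b))
                                  (Delta1r a)) (Delta0 h);
  Delta1l_actr : forall a h, Delta1l (actr a h) =
    tlift (hHH lmH) (fun x y => tlift lmAH (fun b k => tens lmAH (actr b x) (k * y))
                                  (Delta1l a)) (Delta0 h);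
  Delta1r_actr : forall a h, Delta1r (actr a h) =
    tlift (hHH lmH) (fun x y => tlift lmHA (fun k b => tens lmHA (k * x) (actr b y))
                                  (Delta1r a)) (Delta0 h);
  Delta_f : forall a, Delta0 (fA a) =
    tmap lmAH (hHH lmH) fA id (Delta1l a) + tmap lmHA (hHH lmH) id fA (Delta1r a);
  S1 : lmA -> lmA;
  S1_lin : lin S1;
  fS1 : forall a, fA (S1 a) = S0 (fA a);
  antipode1l : forall a,
    tlift lmAH (fun b k => actr (S1 b) k) (Delta1l a) +
    tlift lmHA (fun k b => actl (S0 k) b) (Delta1r a) = 0;
  antipode1r : forall a,
    tlift lmAH (fun b k => actr b (S0 k)) (Delta1l a) +
    tlift lmHA (fun k b => actl k (S1 b)) (Delta1r a) = 0 }.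

Section GroupLike.
Variables (K : fieldType) (X : lm_hopf K).
Local Notation H := (hH (lmH X)).
Local Notation A := (lmA X).

Definition group_like (g : H) : Prop :=
  g <> 0 /\ Delta0 g = tens (hHH (lmH X)) g g.

(* An edge-like element a together with the group-like elements s(a), t(a)
   witnessing Delta1(a) = a (x) t(a) + s(a) (x) a; recorded as (s(a), a, t(a)). *)
Definition edge_like (e : H * A * H) : Prop :=
  let: (s, a, t) := e in
  [/\ group_like s, group_like t,
      Delta1l a = tens (lmAH X) a t & Delta1r a = tens (lmHA X) s a].

Definition src (e : H * A * H) : H := e.1.1.
Definition tgt (e : H * A * H) : H := e.2.
Definition elt (e : H * A * H) : A := e.1.2.

Definition act_right (e : H * A * H) (g : H) : H * A * H :=
  (e.1.1 * g, actr e.1.2 g, e.2 * g).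
Definition act_left (g : H) (e : H * A * H) : H * A * H :=
  (g * e.1.1, actl g e.1.2, g * e.2).
End GroupLike.

(* Group-like graph, stated for a graph whose vertex and arrow sets are
   carved out by predicates PV, PE in ambient types V, E.  The multiplication
   of the Cartesian square (vertices V x V, arrows E x V |_| V x E) is given
   by mV on vertices and by mEV, mVE on the two kinds of arrows. *)
Definition group_like_graph_on (V E : Type) (PV : V -> Prop) (PE : E -> Prop)
  (s t : E -> V) (mV : V -> V -> V) (mEV : E -> V -> E) (mVE : V -> E -> E) : Prop :=
  (forall e, PE e -> PV (s e) /\ PV (t e)) /\
  (forall u v, PV u -> PV v -> PV (mV u v)) /\
  (forall e v, PE e -> PV v -> PE (mEV e v)) /\
  (forall v e, PV v -> PE e -> PE (mVE v e)) /\
  (forall e v, PE e -> PV v ->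
     s (mEV e v) = mV (s e) v /\ t (mEV e v) = mV (t e) v) /\
  (forall v e, PV v -> PE e ->
     s (mVE v e) = mV v (s e) /\ t (mVE v e) = mV v (t e)) /\
  (* associativity, on vertices and on the three kinds of arrows of the cube *)
  (forall u v w, PV u -> PV v -> PV w -> mV (mV u v) w = mV u (mV v w)) /\
  (forall e u v, PE e -> PV u -> PV v -> mEV (mEV e u) v = mEV e (mV u v)) /\
  (forall u e v, PV u -> PE e -> PV v -> mEV (mVE u e) v = mVE u (mEV e v)) /\
  (forall u v e, PV u -> PV v -> PE e -> mVE (mV u v) e = mVE u (mVE v e)) /\
  (exists one, PV one /\ (forall v, PV v -> mV one v = v /\ mV v one = v) /\
     forall v, PV v -> exists w, PV w /\ mV v w = one /\ mV w v = one).

(* A group-like g has counit 1, so the antipode axioms make S0 g a two-sided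
   inverse of g.  Right multiplication by g (x) g on H (x) H is then invertible,
   with inverse right multiplication by S0 g (x) S0 g; since Delta0 is
   multiplicative this shows that products and antipodes of group-likes are
   group-like.  Because Delta1 is an H-bimodule map, for group-likes g, h and an
   edge-like a with Delta1(a) = a (x) t + s (x) a we get
   Delta1(g a h) = g a h (x) g t h + g s h (x) g a h, so the two-sided action
   preserves edge-likes and is compatible with source and target; associativity
   is inherited from the bimodule axioms. *)
From mathcomp Require Import all_boot all_order all_algebra.
From Stdlib Require Import ClassicalEpsilon FunctionalExtensionality.
Set Implicit Arguments. Unset Strict Implicit. Unset Printing Implicit Defensive.
Import GRing.Theory.
Local Open Scope ring_scope.

Section TensorLift.
Variables (K : fieldType) (U V : lmodType K) (T : tensor U V).

Lemma tlift_spec (W : lmodType K) (b : U -> V -> W) : bilin b ->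
  lin (tlift T b) /\ forall u v, tlift T b (tens T u v) = b u v.
Proof.
move=> bilin_b; apply: (epsilon_spec (inhabits (fun _ => 0))
  (fun phi => lin phi /\ forall u v, phi (tens T u v) = b u v)).
exact: tens_univ.
Qed.

Lemma lin_tlift (W : lmodType K) (b : U -> V -> W) : bilin b -> lin (tlift T b).
Proof. by case/tlift_spec. Qed.

Lemma tliftE (W : lmodType K) (b : U -> V -> W) u v :
  bilin b -> tlift T b (tens T u v) = b u v.
Proof. by case/tlift_spec=> _ ->. Qed.

End TensorLift.

Lemma tlift_tens2 (K : fieldType) (U V U' V' W : lmodType K)
    (T : tensor U V) (T' : tensor U' V')
    (b : U -> V -> U' -> V' -> W) u v u' v' :
  (forall x y, bilin (b x y)) -> bilin (fun x y => b x y u' v') ->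
  tlift T (fun x y => tlift T' (b x y) (tens T' u' v')) (tens T u v) = b u v u' v'.
Proof.
move=> bilin_bxy bilin_b.
have -> : (fun x y => tlift T' (b x y) (tens T' u' v')) = (fun x y => b x y u' v').
  by do 2 apply: functional_extensionality => ?; rewrite tliftE.
by rewrite tliftE.
Qed.

Lemma bilin_tens (K : fieldType) (U V U' V' : lmodType K) (T : tensor U' V')
    (f : U -> U') (g : V -> V') :
  lin f -> lin g -> bilin (fun u v => tens T (f u) (g v)).
Proof.
move=> lin_f lin_g; have [tens_linl tens_linr] := tens_bilin T.
by split=> [v | u] a x y /=; rewrite ?lin_f ?tens_linl ?lin_g ?tens_linr.
Qed.

Section AlgebraTensorSquare.
Variables (K : fieldType) (R : algType K) (T : tensor R R).

Lemma lin_mull (y : R) : lin (fun x : R => x * y).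
Proof. by move=> a x z; rewrite mulrDl -scalerAl. Qed.

Lemma lin_mulr (y : R) : lin (fun x : R => y * x).
Proof. by move=> a x z; rewrite mulrDr -scalerAr. Qed.

Lemma bilin_mul (f g : R -> R) : lin f -> lin g -> bilin (fun x y => f x * g y).
Proof.
move=> lin_f lin_g; split=> [v | u] a x y.
- by rewrite lin_f mulrDl -scalerAl.
- by rewrite lin_g mulrDr -scalerAr.
Qed.

Lemma bilin_mul_tens (u w : R) : bilin (fun x y => tens T (x * u) (y * w)).
Proof. exact: bilin_tens (lin_mull u) (lin_mull w). Qed.

Definition rmul_tens (u : R) : tspace T -> tspace T :=
  tlift T (fun x y => tens T (x * u) (y * u)).

Lemma rmul_tensE u x y : rmul_tens u (tens T x y) = tens T (x * u) (y * u).
Proof. exact/tliftE/bilin_mul_tens. Qed.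

Lemma rmul_tensK u w : u * w = 1 -> cancel (rmul_tens u) (rmul_tens w).
Proof.
move=> uw1; have lin_rmul v : lin (rmul_tens v) by apply/lin_tlift/bilin_mul_tens.
apply: (tens_uniq (phi := rmul_tens w \o rmul_tens u) (psi := id)) => //.
- by move=> a x y /=; rewrite !lin_rmul.
- by move=> x y /=; rewrite !rmul_tensE -!mulrA uw1 !mulr1.
Qed.

Lemma rinv_neq0 (x y : R) : x * y = 1 -> x <> 0.
Proof. by move=> xy1 x0; move: xy1; rewrite x0 mul0r => /eqP; rewrite eq_sym oner_eq0. Qed.

Lemma linv_neq0 (x y : R) : y * x = 1 -> x <> 0.
Proof. by move=> yx1 x0; move: yx1; rewrite x0 mulr0 => /eqP; rewrite eq_sym oner_eq0. Qed.

End AlgebraTensorSquare.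
Arguments rmul_tens {K R} T u _.
Arguments rmul_tensK {K R} T [u w].

Section LMHopf.
Variables (K : fieldType) (X : lm_hopf K).
Local Notation H := (hH (lmH X)).
Local Notation HH := (hHH (lmH X)).

Lemma group_like1 : group_like (1 : H).
Proof. by split; [apply/eqP/oner_neq0 | exact: Delta0_one]. Qed.

Lemma eps0_group_like (g : H) : group_like g -> eps0 g = 1.
Proof.
case=> g_neq0 Dg; have := counitl g.
rewrite Dg tliftE; last first.
  split=> [v | u] a x y; first by rewrite eps0_lin scalerDl scalerA.
  by rewrite scalerDr !scalerA mulrC.
move=> eps_g; have /eqP : (eps0 g - 1) *: g = 0 by rewrite scalerBl eps_g scale1r subrr.
by rewrite scaler_eq0 subr_eq0 (negbTE (introN eqP g_neq0)) orbF => /eqP.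
Qed.

Lemma mulrS0_group_like (g : H) : group_like g -> g * S0 g = 1.
Proof.
move=> gl_g; have := antipoder g.
rewrite (proj2 gl_g) eps0_group_like // scale1r tliftE //.
exact: bilin_mul (fun _ _ _ => erefl) (@S0_lin _ _).
Qed.

Lemma mulS0r_group_like (g : H) : group_like g -> S0 g * g = 1.
Proof.
move=> gl_g; have := antipodel g.
rewrite (proj2 gl_g) eps0_group_like // scale1r tliftE //.
exact: bilin_mul (@S0_lin _ _) (fun _ _ _ => erefl).
Qed.

Lemma Delta0_mul_group_like (x g : H) :
  Delta0 g = tens HH g g -> Delta0 (x * g) = rmul_tens HH g (Delta0 x).
Proof.
move=> Dg; rewrite Delta0_mul Dg; congr tlift.
do 2 apply: functional_extensionality => ?.
by rewrite tliftE //; apply: bilin_tens; apply: lin_mulr.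
Qed.

Lemma group_like_mul (g h : H) :
  group_like g -> group_like h -> group_like (g * h).
Proof.
move=> gl_g gl_h; split.
  apply: (@rinv_neq0 _ _ _ (S0 h * S0 g)).
  by rewrite mulrA -(mulrA g) mulrS0_group_like // mulr1 mulrS0_group_like.
by rewrite Delta0_mul_group_like ?(proj2 gl_h) // (proj2 gl_g) rmul_tensE.
Qed.

Lemma group_like_S0 (g : H) : group_like g -> group_like (S0 g).
Proof.
move=> gl_g; split; first exact: linv_neq0 (mulrS0_group_like gl_g).
rewrite -(rmul_tensK HH (mulrS0_group_like gl_g) (Delta0 (S0 g))).
rewrite -Delta0_mul_group_like ?(proj2 gl_g) // mulS0r_group_like // Delta0_one.
by rewrite rmul_tensE !mul1r.
Qed.

Lemma edge_like_act_left (g : H) e :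
  group_like g -> edge_like e -> edge_like (act_left g e).
Proof.
case: e => [[s a] t] /[dup] gl_g [_ Dg] [gl_s gl_t D1l D1r].
split; try exact: group_like_mul.
- rewrite /= Delta1l_actl D1l Dg tlift_tens2 //.
    by move=> x y; apply: bilin_tens; [exact: (actl_bilin X).2 | exact: lin_mulr].
  by apply: bilin_tens; [exact: (actl_bilin X).1 | exact: lin_mull].
- rewrite /= Delta1r_actl D1r Dg tlift_tens2 //.
    by move=> x y; apply: bilin_tens; [exact: lin_mulr | exact: (actl_bilin X).2].
  by apply: bilin_tens; [exact: lin_mull | exact: (actl_bilin X).1].
Qed.

Lemma edge_like_act_right (g : H) e :
  group_like g -> edge_like e -> edge_like (act_right e g).
Proof.
case: e => [[s a] t] /[dup] gl_g [_ Dg] [gl_s gl_t D1l D1r].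
split; try exact: group_like_mul.
- rewrite /= Delta1l_actr D1l Dg tlift_tens2 //.
    by move=> x y; apply: bilin_tens; [exact: (actr_bilin X).1 | exact: lin_mull].
  by apply: bilin_tens; [exact: (actr_bilin X).2 | exact: lin_mulr].
- rewrite /= Delta1r_actr D1r Dg tlift_tens2 //.
    by move=> x y; apply: bilin_tens; [exact: lin_mull | exact: (actr_bilin X).1].
  by apply: bilin_tens; [exact: lin_mulr | exact: (actr_bilin X).2].
Qed.

Lemma act_rightA e (u v : H) : act_right (act_right e u) v = act_right e (u * v).
Proof. by rewrite /act_right /= actrM !mulrA. Qed.

Lemma act_left_right (u v : H) e :
  act_right (act_left u e) v = act_left u (act_right e v).
Proof. by rewrite /act_right /act_left /= actlr !mulrA. Qed.

Lemma act_leftA (u v : H) e : act_left (u * v) e = act_left u (act_left v e).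
Proof. by rewrite /act_left /= actlM !mulrA. Qed.

End LMHopf.

Theorem mainTheorem12 (K : fieldType) (charK0 : [pchar K] =i pred0)
  (X : lm_hopf K) :
  (* the two-sided action of H on A restricts to G_0(H) acting on G_1(A) *)
  (forall (g : hH (lmH X)) (e : hH (lmH X) * lmA X * hH (lmH X)),
     group_like g -> edge_like e ->
     edge_like (act_left g e) /\ edge_like (act_right e g)) /\
  (* (G_0(H) <= G_1(A)) is a group-like graph *)
  group_like_graph_on (@group_like K X) (@edge_like K X) (@src K X) (@tgt K X)
    (fun g h => g * h) (@act_right K X) (@act_left K X).
Proof.
split; first by move=> g e gl_g el_e; split;
  [exact: edge_like_act_left | exact: edge_like_act_right].
split; first by case=> [[s a] t] [].
split; first by move=> u v; exact: group_like_mul.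
split; first by move=> e v el_e gl_v; exact: edge_like_act_right.
split; first by move=> v e; exact: edge_like_act_left.
split; first by [].
split; first by [].
split; first by move=> u v w _ _ _; rewrite mulrA.
split; first by move=> e u v _ _ _; rewrite act_rightA.
split; first by move=> u e v _ _ _; rewrite act_left_right.
split; first by move=> u v e _ _ _; rewrite act_leftA.
exists 1; split; first exact: group_like1.
split=> [v _ | v gl_v]; first by rewrite mul1r mulr1.
exists (S0 v); split; first exact: group_like_S0.
by rewrite mulrS0_group_like // mulS0r_group_like.
Qed.
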